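(* Let $\mu\ge 2$ be an integer and consider a Markov chain $(X_t)_{t\ge0}$ on $\{1,2,\dots,\mu\}$ with transition probabilities $\Pr[X_{t+1}=X_t+1\mid X_t]=X_t(\mu-X_t)/\mu^2$ for $1\le X_t<\mu$, $\Pr[X_{t+1}=X_t-1\mid X_t]=X_t(\mu-X_t)/\mu^2$ for $1<X_t<\mu$, and $X_{t+1}=X_t$ with the remaining probability. Let $T$ be the first hitting time of state $\mu$. Then for all starting states $X_0$, \[ \frac12(\mu-X_0)\mu\ln(\mu-1)\le \mathrm{E}[T\mid X_0]\le 4(\mu-X_0)\mu H_{\lfloor\mu/2\rfloor}\le 4\mu^2\ln\mu. \] In addition, if $n$ is a positive integer with $\mu\le n$, then $\Pr[T\ge 8\mu^2\log^3 n]\le n^{-\log n}$.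
   Context: $H_m=\sum_{k=1}^m 1/k$ denotes the $m$-th harmonic number; $\ln$ is the natural logarithm and $\log$ the binary logarithm. *)

From HB Require Import structures.
From mathcomp Require Import all_boot all_order all_algebra.
From mathcomp Require Import all_classical all_reals all_analysis.
Set Implicit Arguments. Unset Strict Implicit. Unset Printing Implicit Defensive.
Import Order.TTheory GRing.Theory Num.Theory.
Local Open Scope ring_scope.

Section Chain.
Variable R : realType.

Definition harmonic_num (m : nat) : R := \sum_(1 <= k < m.+1) (k%:R)^-1.

Definition log_2 (x : R) : R := ln x / ln 2.

Definition pup (mu i : nat) : R :=
  if (1 <= i < mu)%N then (i * (mu - i))%:R / (mu ^ 2)%:R else 0.
Definition pdown (mu i : nat) : R :=
  if (1 < i < mu)%N then (i * (mu - i))%:R / (mu ^ 2)%:R else 0.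
Definition ptrans (mu i j : nat) : R :=
  if j == i.+1 then pup mu i
  else if j.+1 == i then pdown mu i
  else if j == i then 1 - pup mu i - pdown mu i
  else 0.

(* killed : q mu x0 t j = Pr[X_t = j and X_s <> mu for all s < t | X_0 = x0]
   i.e. Pr[X_t = j /\ T >= t]. *)
Fixpoint killed (mu x0 t j : nat) : R :=
  match t with
  | 0 => if j == x0 then 1 else 0
  | t'.+1 => \sum_(1 <= i < mu) killed mu x0 t' i * ptrans mu i j
  end.

Definition hit_ge (mu x0 t : nat) : R := \sum_(1 <= j < mu.+1) killed mu x0 t j.

(* Pr[T >= c | X_0 = x0] for a real threshold c (T integer-valued, so
   T >= c iff T >= ceil c; for c <= 0 this is Pr[T >= 0] = 1). *)
Definition hit_ge_real (mu x0 : nat) (c : R) : R :=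
  hit_ge mu x0 `|Num.ceil (Num.max c 0%R)|%N.

(* E[T | X_0 = x0] = sum_{t >= 1} Pr[T >= t], an extended real
   (it is +oo if T = oo with positive probability). *)
Definition hit_time_exp (mu x0 : nat) : \bar R :=
  (\sum_(1 <= t <oo) (hit_ge mu x0 t)%:E)%E.

End Chain.

Arguments harmonic_num R m : clear implicits.
Arguments hit_time_exp R mu x0 : clear implicits.
Arguments hit_ge R mu x0 t : clear implicits.
Arguments hit_ge_real R mu x0 c : clear implicits.
Arguments log_2 R x : clear implicits.

From HB Require Import structures.
From mathcomp Require Import all_boot all_order all_algebra.
From mathcomp Require Import all_classical all_reals all_analysis.
From mathcomp Require Import ring lra zify.
Set Implicit Arguments. Unset Strict Implicit. Unset Printing Implicit Defensive.
Import Order.TTheory GRing.Theory Num.Theory numFieldNormedType.Exports.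
Local Open Scope ring_scope.

(* The expected hitting time of [mu] from [x] is
   [exp_hit x = sum_(x <= i < mu) sum_(1 <= k <= i) mu^2 / (k (mu - k))], the solution of the
   first-step equations; as [mu^2 / (k (mu - k)) = mu / k + mu / (mu - k)], both bounds on it
   reduce to estimates of harmonic numbers. The series [sum_t Pr[T >= t]] defining the
   expectation is matched with [exp_hit] through [E[exp_hit X_t; T >= t]], which decreases by
   [Pr[T >= t + 1]] at each step and tends to 0 by Markov's inequality.
   For the tail, [max_y E[T | X_0 = y] = exp_hit 1 = mu^2 H_(mu-1) <= (5/3) mu^2 log n], so by
   Markov's inequality and the Markov property each of [k = ceil (log^2 n)] consecutive phases
   of length about [2 exp_hit 1] fails to hit [mu] with probability at most 1/2. *)

Lemma sum_nat_ifeq (R : nmodType) (F : nat -> R) a m n :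
  \sum_(m <= k < n) (if k == a then F k else 0) = if (m <= a < n)%N then F a else 0.
Proof. by rewrite -big_mkcond big_nat1_eq. Qed.

Lemma sum_nat_triangle (R : nmodType) (F : nat -> R) n :
  \sum_(1 <= i < n) \sum_(1 <= k < i.+1) F k = \sum_(1 <= k < n) F k *+ (n - k).
Proof.
elim: n => [|n IH]; first by rewrite !big_geq.
have [->|n_gt0] := posnP n; first by rewrite !big_geq.
rewrite big_nat_recr //= IH [\sum_(1 <= k < n.+1) F k]big_nat_recr //=.
rewrite [RHS]big_nat_recr //= subSnn mulr1n addrA -big_split /=; congr (_ + _).
by apply: eq_big_nat => k /andP[_ k_lt]; rewrite subSn 1?ltnW // mulrSr.
Qed.

Section LnBounds.
Variable R : realType.

Lemma ln_ge1V (x : R) : 0 < x -> 1 - x^-1 <= ln x.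
Proof.
move=> x_gt0; have xV_gt0 : 0 < x^-1 by rewrite invr_gt0.
have := @le_ln1Dx R (x^-1 - 1); rewrite (addrC 1) subrK lnV ?posrE //.
by move=> /(_ _); lra.
Qed.

Lemma ln_ge_pade (y : R) : 1 <= y -> 2 * (y - 1) <= (y + 1) * ln y.
Proof.
move=> y_ge1.
pose h : R -> R := ((@id R) + cst 1) * (@ln R) - cst 2 * ((@id R) - cst 1).
have hE z : h z = (z + 1) * ln z - 2 * (z - 1) by [].
have dh (x : R) : 0 < x -> is_derive x 1 h (ln x + (x + 1) / x - 2).
  move=> x_gt0; have := is_derive1_ln x_gt0 => dln; apply: is_derive_eq.
  change ((x + 1) * x^-1 + ln x * (1 + 0) - (2 * (1 - 0) + (x - 1) * 0)
    = ln x + (x + 1) / x - 2); ring.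
have derivable_h (x : R) : 0 < x -> derivable h x 1.
  by move=> /dh Dh; exact: ex_derive.
have h'_ge0 (x : R) : 0 < x -> 0 <= (h^`())%classic x.
  move=> x_gt0; have := dh x x_gt0 => Dh; rewrite derive1E derive_val.
  have -> : (x + 1) / x = 1 + x^-1 by field; rewrite gt_eqF.
  by have := ln_ge1V x_gt0; lra.
have in_gt0 (x : R) : x \in `[1, y] -> 0 < x by rewrite in_itv /= => /andP[? _]; lra.
have : h 1 <= h y.
  apply: (@ger0_derive1_le_cc R h 1 y
    (fun x xin => derivable_h x (in_gt0 x (subset_itv_oo_cc xin)))
    (fun x xin => h'_ge0 x (in_gt0 x (subset_itv_oo_cc xin)))
    (derivable_within_continuous (fun x xin => derivable_h x (in_gt0 x xin))));
  by rewrite ?in_itv /= ?lexx ?y_ge1.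
by rewrite !hE ln1; lra.
Qed.

Lemma ln2_le : ln (2 : R) <= 5 / 6.
Proof.
have -> : (2 : R) = (1 + 2^-1) * (1 + 3^-1) by field.
rewrite lnM ?posrE //.
have : ln (1 + 2^-1) <= 2^-1 :> R by apply: le_ln1Dx; lra.
have : ln (1 + 3^-1) <= 3^-1 :> R by apply: le_ln1Dx; lra.
lra.
Qed.

(* Pair [i] with [a + b - 1 - i]: [(i + 1) (a + b - i) >= b]. *)
Lemma sum_ln_pair (a b : nat) : (a <= b)%N ->
  (b - a)%:R * ln (b%:R : R) <= 2 * \sum_(a <= i < b) ln (i.+1%:R : R).
Proof.
move=> ab; rewrite mulr2n mulrDl mul1r.
rewrite [X in _ <= _ + X]big_nat_rev /= -big_split /=.
rewrite mulr_natl -sumr_const_nat; apply: ler_sum_nat => i /andP[ai ib].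
rewrite -lnM ?posrE ?ltr0n // -natrM.
have b_gt0 : (0 < b)%N by lia.
by rewrite ler_ln ?posrE ?ltr0n ?muln_gt0 ?ler_nat //; nia.
Qed.

End LnBounds.

Section Harmonic.
Variable R : realType.
Local Notation H := (harmonic_num R).

Lemma harmonic_num_ge0 m : 0 <= H m.
Proof. by apply: sumr_ge0 => k _; rewrite invr_ge0 ler0n. Qed.

Lemma le_harmonic_num m n : (m <= n)%N -> H m <= H n.
Proof.
move=> mn; rewrite /harmonic_num (big_cat_nat (n := m.+1) (p := n.+1)) //= lerDl.
by apply: sumr_ge0 => k _; rewrite invr_ge0 ler0n.
Qed.

Lemma harmonic_num_double m : H (2 * m) <= 2 * H m.
Proof.
rewrite /harmonic_num (big_cat_nat (n := m.+1)) //=; last by lia.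
rewrite mulr2n mulrDl mul1r lerD2l -addn1 addnC big_addn.
have -> : ((2 * m).+1 - m = 1 + m)%N by lia.
apply: ler_sum_nat => k /andP[k_ge1 _].
by rewrite lef_pV2 ?posrE ?ltr0n ?ler_nat //; lia.
Qed.

Lemma ln_le_harmonic_num n : ln (n.+1%:R : R) <= H n.
Proof.
elim: n => [|n IH]; first by rewrite ln1 /harmonic_num big_geq.
rewrite /harmonic_num big_nat_recr //= -/(H n).
have n_gt0 : 0 < n.+1%:R :> R by rewrite ltr0n.
have -> : n.+2%:R = n.+1%:R * (1 + n.+1%:R^-1) :> R.
  by rewrite mulrDr mulr1 mulfV ?gt_eqF // natr1.
rewrite lnM ?posrE ?ltr_wpDr ?invr_ge0 // ?ler0n //.
apply: lerD => //; apply: le_ln1Dx.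
by apply: lt_le_trans (ltrN10 R) _; rewrite invr_ge0.
Qed.

(* Each step [1/(m+1) <= ln((2m+3)/(2m+1))] is [ln_ge_pade] at [y = (2m+3)/(2m+1)]. *)
Lemma harmonic_num_le_ln m : H m <= ln ((2 * m).+1%:R : R).
Proof.
elim: m => [|m IH]; first by rewrite ln1 /harmonic_num big_geq.
rewrite /harmonic_num big_nat_recr //= -/(H m).
set a : R := (2 * m).+1%:R in IH *.
have a_gt0 : 0 < a by rewrite ltr0n.
set y := 1 + 2 / a.
have y_ge1 : 1 <= y by rewrite /y lerDl divr_ge0 // ltW.
have -> : (2 * m.+1).+1%:R = a * y :> R.
  rewrite /y mulrDr mulr1 mulrCA mulfV ?gt_eqF // mulr1 /a.
  by rewrite -natrD; congr _%:R; lia.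
have -> : m.+1%:R^-1 = 2 / (a + 1) :> R.
  have -> : a + 1 = 2 * m.+1%:R by rewrite /a natr1 -natrM; congr _%:R; lia.
  by rewrite invfM mulrA mulfV ?mul1r.
rewrite lnM ?posrE ?a_gt0 ?(lt_le_trans ltr01 y_ge1) //; apply: lerD => //.
have := ln_ge_pade y_ge1; have := ln_ge0 y_ge1.
rewrite /y ler_pdivrMr; last by lra.
move: (ln _) => L; have : a * a^-1 = 1 by rewrite mulfV ?gt_eqF.
move: (a^-1) => t.
nra.
Qed.

End Harmonic.

Section Chain.
Variables (R : realType) (mu : nat).

Lemma ptransE i k : (1 <= i)%N ->
  ptrans R mu i k = (if k == i.+1 then pup R mu i else 0)
     + (if k == i.-1 then pdown R mu i else 0)
     + (if k == i then 1 - pup R mu i - pdown R mu i else 0).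
Proof.
move=> i_ge1; rewrite /ptrans.
have -> : (k.+1 == i) = (k == i.-1) by case: i i_ge1 => // i _; rewrite eqSS.
have [->|k_ne1] := eqVneq k i.+1; first by rewrite !ifN ?addr0 //; apply/eqP; lia.
have [->|k_ne2] := eqVneq k i.-1; first by rewrite !ifN ?addr0 ?add0r //; apply/eqP; lia.
by rewrite !add0r.
Qed.

Lemma sum_ptrans_mul i (h : nat -> R) : (1 <= i < mu)%N ->
  \sum_(1 <= k < mu.+1) ptrans R mu i k * h k =
  pup R mu i * h i.+1 + pdown R mu i * h i.-1
  + (1 - pup R mu i - pdown R mu i) * h i.
Proof.
move=> /andP[i_ge1 i_lt].
rewrite (eq_bigr (fun k => (if k == i.+1 then pup R mu i * h k else 0)
    + (if k == i.-1 then pdown R mu i * h k else 0)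
    + (if k == i then (1 - pup R mu i - pdown R mu i) * h k else 0))); last first.
  by move=> k _; rewrite ptransE // 2!mulrDl; do 3!case: ifP => _; rewrite ?mul0r.
rewrite !big_split /= !sum_nat_ifeq.
have -> : (1 <= i.+1 < mu.+1)%N by lia.
have -> : (1 <= i < mu.+1)%N by lia.
have [i_gt1|i_le1] := ltnP 1 i; first by have -> : (1 <= i.-1 < mu.+1)%N by lia.
have -> : (1 <= i.-1 < mu.+1)%N = false by lia.
by rewrite [pdown _ _ _]ifN ?mul0r //; lia.
Qed.

Lemma mul_subn_le_half i : (i <= mu)%N -> (i * (mu - i))%:R / (mu ^ 2)%:R <= 2^-1 :> R.
Proof.
move=> i_le; have [->|mu_gt0] := posnP mu; first by rewrite exp0n // invr0 mulr0 invr_ge0.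
rewrite ler_pdivrMr ?ltr0n ?expn_gt0 ?mu_gt0 // -(ler_pM2l (x := 2)) ?ltr0n //.
rewrite mulrA mulfV ?pnatr_eq0 // mul1r -natrM ler_nat; nia.
Qed.

Lemma pup_ge0 i : 0 <= pup R mu i.
Proof. by rewrite /pup; case: ifP => // _; rewrite divr_ge0 // ler0n. Qed.

Lemma pdown_ge0 i : 0 <= pdown R mu i.
Proof. by rewrite /pdown; case: ifP => // _; rewrite divr_ge0 // ler0n. Qed.

Lemma pup_le_half i : pup R mu i <= 2^-1.
Proof.
by rewrite /pup; case: ifP => [/andP[_ /ltnW /mul_subn_le_half]|_] //; rewrite invr_ge0.
Qed.

Lemma pdown_le_half i : pdown R mu i <= 2^-1.
Proof.
by rewrite /pdown; case: ifP => [/andP[_ /ltnW /mul_subn_le_half]|_] //; rewrite invr_ge0.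
Qed.

Lemma ptrans_ge0 i k : 0 <= ptrans R mu i k.
Proof.
rewrite /ptrans; case: ifP => _; first exact: pup_ge0.
case: ifP => _; first exact: pdown_ge0.
case: ifP => _ //; have := pup_le_half i; have := pdown_le_half i; lra.
Qed.

Lemma sum_ptrans i : (1 <= i < mu)%N -> \sum_(1 <= k < mu.+1) ptrans R mu i k = 1.
Proof.
move=> i_in; under eq_bigr do rewrite -[ptrans _ _ _ _]mulr1.
by rewrite (sum_ptrans_mul (fun=> 1)) // !mulr1; ring.
Qed.

Lemma killed_ge0 x0 t j : 0 <= killed R mu x0 t j.
Proof.
elim: t j => [|t IH] j /=; first by case: ifP.
by apply: sumr_ge0 => i _; rewrite mulr_ge0 // ptrans_ge0.
Qed.

Lemma killedD x0 a b j : (1 <= j <= mu)%N ->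
  killed R mu x0 (a + b) j = \sum_(1 <= y < mu.+1) killed R mu x0 a y * killed R mu y b j.
Proof.
elim: b j => [|b IH] j j_in.
  under eq_bigr => y _ do rewrite /= (eq_sym j) (fun_if (fun c => _ * c)) mulr1 mulr0.
  by rewrite addn0 sum_nat_ifeq; have -> : (1 <= j < mu.+1)%N by lia.
rewrite addnS /=.
under eq_big_nat => i /andP[i_ge1 /ltnW i_le] do rewrite IH ?i_ge1 ?i_le // mulr_suml.
rewrite exchange_big /=; apply: eq_bigr => y _.
by rewrite mulr_sumr; apply: eq_bigr => i _; rewrite mulrA.
Qed.

Lemma hit_ge_ge0 x0 t : 0 <= hit_ge R mu x0 t.
Proof. by apply: sumr_ge0 => j _; apply: killed_ge0. Qed.

Lemma hit_ge_at0 x0 : (1 <= x0 <= mu)%N -> hit_ge R mu x0 0 = 1.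
Proof.
by move=> x0_in; rewrite /hit_ge /= sum_nat_ifeq; have -> : (1 <= x0 < mu.+1)%N by lia.
Qed.

Lemma hit_geS x0 t : hit_ge R mu x0 t.+1 = \sum_(1 <= i < mu) killed R mu x0 t i.
Proof.
rewrite /hit_ge /= exchange_big /=; apply: eq_big_nat => i i_in.
by rewrite -mulr_sumr sum_ptrans ?mulr1.
Qed.

Lemma hit_geD x0 a b :
  hit_ge R mu x0 (a + b) = \sum_(1 <= y < mu.+1) killed R mu x0 a y * hit_ge R mu y b.
Proof.
rewrite /hit_ge.
under eq_big_nat => j /andP[j_ge1 j_le] do rewrite killedD ?j_ge1 ?(j_le : (j <= mu)%N) //.
by rewrite exchange_big /=; apply: eq_bigr => y _; rewrite -mulr_sumr.
Qed.

Lemma hit_ge_nonincreasing x0 s t : (1 <= mu)%N -> (s <= t)%N ->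
  hit_ge R mu x0 t <= hit_ge R mu x0 s.
Proof.
move=> mu_ge1 /subnK <-; elim: (t - s)%N => [|d IH]; first by rewrite add0n.
rewrite addSn (le_trans _ IH) // hit_geS /hit_ge big_nat_recr //=.
by rewrite lerDl killed_ge0.
Qed.

(* [step_time i] is the expected time to go from [i] to [i + 1];
   [inv_pup k = 1 / pup k] for [0 < k < mu]. *)
Definition inv_pup k : R := (mu ^ 2)%:R / (k * (mu - k))%:R.
Definition step_time i : R := \sum_(1 <= k < i.+1) inv_pup k.
Definition exp_hit x : R := \sum_(x <= i < mu) step_time i.

Lemma inv_pup_ge0 k : 0 <= inv_pup k.
Proof. by rewrite divr_ge0 // ler0n. Qed.

Lemma step_time_ge0 i : 0 <= step_time i.
Proof. by apply: sumr_ge0 => k _; apply: inv_pup_ge0. Qed.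

Lemma exp_hit_ge0 x : 0 <= exp_hit x.
Proof. by apply: sumr_ge0 => i _; apply: step_time_ge0. Qed.

Lemma exp_hit_mu : exp_hit mu = 0.
Proof. by rewrite /exp_hit big_geq. Qed.

Lemma exp_hit_le1 x : (1 <= x)%N -> exp_hit x <= exp_hit 1.
Proof.
move=> x_ge1; have [x_le|x_gt] := leqP x mu.
  rewrite /exp_hit (big_cat_nat (n := x) (m := 1%N)) //= lerDr.
  by apply: sumr_ge0 => i _; apply: step_time_ge0.
by rewrite /exp_hit (big_geq (m := x)) ?exp_hit_ge0 // ltnW.
Qed.

Lemma pup_inv_pup i : (1 <= i < mu)%N -> pup R mu i * inv_pup i = 1.
Proof.
move=> i_in; rewrite /pup /inv_pup i_in mulrA mulfVK ?mulfV // pnatr_eq0 -lt0n.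
  by rewrite muln_gt0 subn_gt0; lia.
by rewrite expn_gt0; lia.
Qed.

Lemma exp_hit_first_step i : (1 <= i < mu)%N ->
  pup R mu i * exp_hit i.+1 + pdown R mu i * exp_hit i.-1
  + (1 - pup R mu i - pdown R mu i) * exp_hit i = exp_hit i - 1.
Proof.
move=> /[dup] i_in /andP[i_ge1 i_lt].
have gi : exp_hit i = step_time i + exp_hit i.+1 by rewrite /exp_hit big_ltn.
have ti : step_time i = step_time i.-1 + inv_pup i.
  by rewrite /step_time big_nat_recr //= prednK.
have := pup_inv_pup i_in.
have [i_gt1|i_le1] := ltnP 1 i.
  have gi1 : exp_hit i.-1 = step_time i.-1 + exp_hit i.
    by rewrite /exp_hit big_ltn ?prednK //; lia.
  have -> : pdown R mu i = pup R mu i by rewrite /pdown /pup i_in i_gt1 i_lt.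
  rewrite gi1 gi ti => pw; rewrite -[in RHS]pw; ring.
have -> : pdown R mu i = 0 by rewrite /pdown ifN //; lia.
rewrite gi ti; have -> : step_time i.-1 = 0 by rewrite /step_time big_geq // prednK.
by move=> pw; rewrite -[in RHS]pw; ring.
Qed.

(* [residual x0 t] is [E[exp_hit X_t; T >= t]]. *)
Definition residual x0 t : R := \sum_(1 <= j < mu.+1) killed R mu x0 t j * exp_hit j.

Lemma residual_ge0 x0 t : 0 <= residual x0 t.
Proof. by apply: sumr_ge0 => j _; rewrite mulr_ge0 ?killed_ge0 ?exp_hit_ge0. Qed.

Lemma residual_at0 x0 : (1 <= x0 <= mu)%N -> residual x0 0 = exp_hit x0.
Proof.
move=> x0_in; rewrite /residual /=.
under eq_bigr => j _ do rewrite (fun_if (fun c => c * _)) mul1r mul0r.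
by rewrite sum_nat_ifeq; have -> : (1 <= x0 < mu.+1)%N by lia.
Qed.

Lemma residualS x0 t : (1 <= mu)%N ->
  residual x0 t.+1 = residual x0 t - hit_ge R mu x0 t.+1.
Proof.
move=> mu_ge1; rewrite /residual /=.
under eq_bigr => j _ do rewrite mulr_suml.
rewrite exchange_big /= hit_geS [X in X - _]big_nat_recr //= exp_hit_mu mulr0 addr0.
rewrite -sumrB; apply: eq_big_nat => i i_in.
under eq_bigr => j _ do rewrite -mulrA.
by rewrite -mulr_sumr sum_ptrans_mul // exp_hit_first_step // mulrBr mulr1.
Qed.

Lemma sum_hit_ge x0 N : (1 <= x0 <= mu)%N ->
  \sum_(1 <= t < N.+1) hit_ge R mu x0 t = exp_hit x0 - residual x0 N.
Proof.
move=> x0_in; have mu_ge1 : (1 <= mu)%N by lia.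
elim: N => [|N IH]; first by rewrite big_geq // residual_at0 // subrr.
by rewrite big_nat_recr //= IH residualS //; ring.
Qed.

Lemma residual_le x0 t : residual x0 t <= exp_hit 1 * hit_ge R mu x0 t.
Proof.
rewrite /residual /hit_ge mulr_sumr; apply: ler_sum_nat => j /andP[j_ge1 _].
by rewrite mulrC ler_wpM2r ?killed_ge0 ?exp_hit_le1.
Qed.

Lemma hit_ge_markov x0 N : (1 <= x0 <= mu)%N -> (1 <= N)%N ->
  hit_ge R mu x0 N <= exp_hit x0 / N%:R.
Proof.
move=> x0_in N_ge1; rewrite ler_pdivlMr ?ltr0n // mulrC.
have -> : N%:R * hit_ge R mu x0 N = \sum_(1 <= t < N.+1) hit_ge R mu x0 N.
  by rewrite sumr_const_nat mulr_natl subn1.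
apply: le_trans (_ : _ <= \sum_(1 <= t < N.+1) hit_ge R mu x0 t) _.
  by apply: ler_sum_nat => t /andP[_ t_le]; apply: hit_ge_nonincreasing => //; lia.
by rewrite sum_hit_ge // gerBl residual_ge0.
Qed.

Lemma hit_time_expE x0 : (1 <= x0 <= mu)%N -> hit_time_exp R mu x0 = (exp_hit x0)%:E.
Proof.
move=> x0_in; apply: cvg_lim => //; rewrite -2!cvg_shiftS /=.
under eq_fun do rewrite sumEFin sum_hit_ge //.
apply: cvg_EFin; first exact: nearW.
set G := exp_hit 1; set g := exp_hit x0.
apply: (@squeeze_cvgr _ _ _ _ (fun n => g - G * g * harmonic n) (fun=> g)).
- apply: nearW => n /=; rewrite gerBl residual_ge0 andbT lerB // -mulrA.
  apply: le_trans (residual_le _ _) _; rewrite ler_wpM2l ?exp_hit_ge0 //.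
  exact: hit_ge_markov.
- rewrite -[X in (_ --> X)%classic](subr0 g); apply: cvgB; first exact: cvg_cst.
  by rewrite -(mulr0 (G * g)); apply: cvgM; [exact: cvg_cst | exact: cvg_harmonic].
- exact: cvg_cst.
Qed.

Lemma inv_pup_split k : (1 <= k < mu)%N ->
  inv_pup k = mu%:R / k%:R + mu%:R / (mu - k)%:R.
Proof.
move=> /andP[k_ge1 k_lt]; rewrite /inv_pup natrM natrX natrB 1?ltnW //.
have k_neq0 : k%:R != 0 :> R by rewrite pnatr_eq0 -lt0n.
have mk_neq0 : mu%:R - k%:R != 0 :> R by rewrite subr_eq0 eqr_nat; apply/eqP; lia.
by field; rewrite k_neq0 mk_neq0.
Qed.

Lemma step_time_ge i : (i < mu)%N -> mu%:R * harmonic_num R i <= step_time i.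
Proof.
move=> i_lt; rewrite /step_time /harmonic_num mulr_sumr.
apply: ler_sum_nat => k /andP[k_ge1 k_le]; rewrite inv_pup_split; last by lia.
by rewrite lerDl divr_ge0 ?ler0n.
Qed.

Lemma step_time_le i : (i < mu)%N -> step_time i <= step_time mu.-1.
Proof.
move=> i_lt; rewrite /step_time prednK; last by lia.
rewrite (big_cat_nat (n := i.+1) (p := mu)) //= lerDl.
by apply: sumr_ge0 => k _; apply: inv_pup_ge0.
Qed.

Lemma step_time_last : (1 <= mu)%N -> step_time mu.-1 = 2 * mu%:R * harmonic_num R mu.-1.
Proof.
move=> mu_ge1; rewrite /step_time /harmonic_num prednK //.
under eq_big_nat => k k_in do rewrite inv_pup_split //.
rewrite big_split /= [X in _ + X]big_nat_rev /=.
rewrite [X in _ + X](eq_big_nat _ _ (F2 := fun k => mu%:R / k%:R)); last first.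
  by move=> k k_in; congr (_ / _%:R); lia.
by rewrite -mulrA mulr_sumr -mulr2n mulr_natl.
Qed.

Lemma exp_hit1 : (1 <= mu)%N -> exp_hit 1 = (mu ^ 2)%:R * harmonic_num R mu.-1.
Proof.
move=> mu_ge1; rewrite /exp_hit /step_time sum_nat_triangle /harmonic_num prednK //.
rewrite mulr_sumr; apply: eq_big_nat => k /andP[k_ge1 k_lt].
rewrite -[_ *+ _]mulr_natr /inv_pup natrM natrB 1?ltnW //.
have k_neq0 : k%:R != 0 :> R by rewrite pnatr_eq0 -lt0n.
have mk_neq0 : mu%:R - k%:R != 0 :> R by rewrite subr_eq0 eqr_nat; apply/eqP; lia.
by field; rewrite k_neq0 mk_neq0.
Qed.

Lemma exp_hit_ge x0 : (2 <= mu)%N -> (1 <= x0 <= mu)%N ->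
  2^-1 * (mu - x0)%:R * mu%:R * ln ((mu - 1)%:R : R) <= exp_hit x0.
Proof.
move=> mu_ge2 /andP[_ x0_le].
have sum_ln_le : mu%:R * \sum_(x0 <= i < mu) ln (i.+1%:R : R) <= exp_hit x0.
  rewrite /exp_hit mulr_sumr; apply: ler_sum_nat => i /andP[_ i_lt].
  apply: le_trans (step_time_ge i_lt); rewrite ler_wpM2l ?ler0n //.
  exact: ln_le_harmonic_num.
have := sum_ln_pair R x0_le.
have : ln ((mu - 1)%:R : R) <= ln mu%:R by rewrite ler_ln ?posrE ?ltr0n ?ler_nat; lia.
have : 0 <= (mu - x0)%:R * mu%:R :> R by rewrite -natrM ler0n.
have : 0 <= mu%:R :> R by rewrite ler0n.
nra.
Qed.

Lemma exp_hit_le x0 : (2 <= mu)%N -> (1 <= x0 <= mu)%N ->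
  exp_hit x0 <= 4 * (mu - x0)%:R * mu%:R * harmonic_num R mu./2.
Proof.
move=> mu_ge2 x0_in.
have : exp_hit x0 <= (mu - x0)%:R * step_time mu.-1.
  rewrite /exp_hit mulr_natl -sumr_const_nat.
  by apply: ler_sum_nat => i /andP[_ i_lt]; apply: step_time_le.
have : harmonic_num R mu.-1 <= 2 * harmonic_num R mu./2.
  apply: le_trans (harmonic_num_double _ _); apply: le_harmonic_num.
  by have := odd_double_half mu; rewrite -muln2; case: odd => /=; lia.
rewrite step_time_last; last by lia.
have := harmonic_num_ge0 R mu.-1.
have : 0 <= (mu - x0)%:R * mu%:R :> R by rewrite -natrM ler0n.
nra.
Qed.

Lemma hit_ge_mulr x0 a b q : (forall y, (1 <= y <= mu)%N -> hit_ge R mu y b <= q) ->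
  hit_ge R mu x0 (a + b) <= hit_ge R mu x0 a * q.
Proof.
move=> hit_le; rewrite hit_geD /hit_ge mulr_suml.
apply: ler_sum_nat => y /andP[y_ge1 y_le].
by rewrite ler_wpM2l ?killed_ge0 ?hit_le ?y_ge1.
Qed.

Lemma hit_ge_expn x0 b q k : (1 <= x0 <= mu)%N ->
  (forall y, (1 <= y <= mu)%N -> hit_ge R mu y b <= q) ->
  hit_ge R mu x0 (k * b) <= q ^+ k.
Proof.
move=> x0_in hit_le; have q_ge0 := le_trans (hit_ge_ge0 x0 b) (hit_le x0 x0_in).
elim: k => [|k IH]; first by rewrite hit_ge_at0.
rewrite mulSn addnC exprSr (le_trans (hit_ge_mulr _ _ hit_le)) //.
by rewrite ler_wpM2r.
Qed.

Lemma hit_ge_halving x0 L k : (1 <= x0 <= mu)%N -> (1 <= L)%N ->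
  2 * exp_hit 1 <= L%:R -> hit_ge R mu x0 (k * L) <= 2^-1 ^+ k.
Proof.
move=> x0_in L_ge1 L_ge; apply: hit_ge_expn => // y y_in.
apply: le_trans (hit_ge_markov y_in L_ge1) _.
rewrite ler_pdivrMr ?ltr0n //; apply: le_trans (exp_hit_le1 _) _; first by case/andP: y_in.
lra.
Qed.

End Chain.

Section Estimates.
Variable R : realType.

Lemma natr_absz_ceil (x : R) : 0 <= x -> x <= `|Num.ceil x|%N%:R < x + 1.
Proof.
move=> x_ge0; rewrite natr_absz ger0_norm ?ceil_ge0; last by lra.
by have := ceil_itv x; rewrite intrD => /andP[? ?]; apply/andP; split; lra.
Qed.

Lemma harmonic_half_le_ln mu : (1 <= mu)%N ->
  (mu - 1)%:R * harmonic_num R mu./2 <= mu%:R * ln (mu%:R : R).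
Proof.
move=> mu_ge1; set M : R := mu%:R.
have M_ge1 : 1 <= M by rewrite ler1n.
have M_gt0 : 0 < M by lra.
have H_le : harmonic_num R mu./2 <= ln M + M^-1.
  apply: le_trans (harmonic_num_le_ln _ _) _.
  apply: le_trans (_ : _ <= ln (M + 1)) _.
    rewrite /M natr1 ler_ln ?posrE ?ltr0n // ler_nat ltnS.
    by have := odd_double_half mu; rewrite -muln2; case: odd => /=; lia.
  have -> : M + 1 = M * (1 + M^-1) by rewrite mulrDr mulr1 mulfV ?gt_eqF.
  have MV_gt0 : 0 < M^-1 by rewrite invr_gt0.
  rewrite lnM ?posrE ?M_gt0 //; last by lra.
  by rewrite lerD2l le_ln1Dx //; lra.
have := ln_ge1V M_gt0; have := harmonic_num_ge0 R mu./2.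
have : M * M^-1 = 1 by rewrite mulfV ?gt_eqF.
rewrite natrB // -/M; move: H_le; move: (harmonic_num _ _) (ln M) (M^-1) => H L t.
nra.
Qed.

Lemma log2_ge1 n : (2 <= n)%N -> 1 <= log_2 R n%:R.
Proof.
move=> n_ge2; have ln2_gt0 : 0 < ln (2 : R) by rewrite ln_gt0 // ltr1n.
by rewrite /log_2 ler_pdivlMr // mul1r ler_ln ?posrE ?ltr0n ?ler_nat //; lia.
Qed.

Lemma exp_hit1_le_log2 mu n : (2 <= mu)%N -> (mu <= n)%N ->
  exp_hit R mu 1 <= 5 / 3 * (mu ^ 2)%:R * log_2 R n%:R.
Proof.
move=> mu_ge2 mu_le; rewrite exp_hit1; last by lia.
have l_ge1 := log2_ge1 (leq_trans mu_ge2 mu_le).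
have ln2_gt0 : 0 < ln (2 : R) by rewrite ln_gt0 // ltr1n.
have H_le : harmonic_num R mu.-1 <= ln 2 * (1 + log_2 R n%:R).
  apply: le_trans (harmonic_num_le_ln _ _) _.
  rewrite mulrDr mulr1 /log_2 mulrC divfK ?gt_eqF // -lnM ?posrE ?ltr0n //; last by lia.
  by rewrite -natrM ler_ln ?posrE ?ltr0n ?ler_nat; lia.
rewrite mulrAC [X in _ <= X]mulrC ler_wpM2l ?ler0n //.
by have := ln2_le R; nra.
Qed.

Lemma halfX_le_powR n k : (0 < n)%N -> log_2 R n%:R ^+ 2 <= k%:R ->
  2^-1 ^+ k <= n%:R `^ (- log_2 R n%:R).
Proof.
move=> n_gt0 k_ge; have ln2_gt0 : 0 < ln (2 : R) by rewrite ln_gt0 // ltr1n.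
have -> : 2^-1 ^+ k = expR (k%:R * - ln 2) :> R.
  by rewrite expRM_natl expRN lnK // posrE.
rewrite /powR gt_eqF ?ltr0n // ler_expR.
have -> : ln (n%:R : R) = log_2 R n%:R * ln 2 by rewrite /log_2 divfK ?gt_eqF.
by move: k_ge; rewrite expr2; nra.
Qed.

Lemma phase_budget (k L l P G : R) : 1 <= l -> 4 <= P -> 0 <= G <= 5 / 3 * P * l ->
  0 <= k <= l ^+ 2 + 1 -> 0 <= L <= 2 * G + 2 -> k * L <= 8 * P * l ^+ 3.
Proof.
move=> l_ge1 P_ge4 /andP[G_ge0 G_le] /andP[k_ge0 k_le] /andP[L_ge0 L_le].
have Pl_ge4 : 4 <= P * l by nra.
have l2_ge1 : 1 <= l ^+ 2 by rewrite exprn_ege1.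
have : k * L <= 2 * l ^+ 2 * (23 / 6 * (P * l)) by apply: ler_pM => //; lra.
have : 0 <= P * l ^+ 3 by rewrite mulr_ge0 ?exprn_ge0; lra.
lra.
Qed.

Lemma hit_ge_real_le mu x0 n : (2 <= mu)%N -> (1 <= x0 <= mu)%N -> (mu <= n)%N ->
  hit_ge_real R mu x0 (8 * (mu ^ 2)%:R * log_2 R n%:R ^+ 3)
    <= (n%:R : R) `^ (- log_2 R n%:R).
Proof.
move=> mu_ge2 x0_in mu_le.
set l := log_2 R n%:R; set P : R := (mu ^ 2)%:R; set G := exp_hit R mu 1.
have l_ge1 : 1 <= l := log2_ge1 (leq_trans mu_ge2 mu_le).
have P_ge4 : 4 <= P by rewrite /P (ler_nat R 4); nia.
have G_ge0 : 0 <= G := exp_hit_ge0 _ _ _.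
have G_le : G <= 5 / 3 * P * l := exp_hit1_le_log2 mu_ge2 mu_le.
have l2_ge0 : 0 <= l ^+ 2 by rewrite exprn_ge0 // (le_trans ler01).
have G2_ge0 : 0 <= 2 * G by rewrite mulr_ge0.
have /andP[k_ge k_lt] := natr_absz_ceil l2_ge0.
have /andP[L_ge L_lt] := natr_absz_ceil G2_ge0.
set k := `|Num.ceil (l ^+ 2)|%N in k_ge k_lt; set L := (`|Num.ceil (2 * G)|%N).+1.
have kL_le : (k * L)%:R <= 8 * P * l ^+ 3.
  rewrite natrM; apply: (phase_budget (G := G)) => //; first by rewrite G_ge0 G_le.
    by rewrite ler0n ltW.
  by rewrite ler0n /L -natr1 /=; lra.
have c_ge0 : 0 <= 8 * P * l ^+ 3 := le_trans (ler0n _ _) kL_le.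
rewrite /hit_ge_real max_l //.
have /andP[c_le _] := natr_absz_ceil c_ge0.
have kL_le_T : (k * L <= `|Num.ceil (8 * P * l ^+ 3)|)%N.
  by rewrite -(ler_nat R); apply: le_trans kL_le c_le.
apply: le_trans (hit_ge_nonincreasing _ _ (ltnW mu_ge2) kL_le_T) _.
apply: le_trans (hit_ge_halving k x0_in (ltn0Sn _) _) _.
  by rewrite /L -[_.+1%:R]natr1 -/G; lra.
by rewrite /l; apply: halfX_le_powR; [lia | exact: k_ge].
Qed.

End Estimates.

Theorem lemma7 (R : realType) (mu x0 : nat) :
  (2 <= mu)%N -> (1 <= x0 <= mu)%N ->
  [/\ ((2^-1 * (mu - x0)%:R * mu%:R * ln ((mu - 1)%:R : R))%R%:E
         <= hit_time_exp R mu x0)%E,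
      (hit_time_exp R mu x0
         <= (4 * (mu - x0)%:R * mu%:R * harmonic_num R (mu./2))%R%:E)%E,
      4 * (mu - x0)%:R * mu%:R * harmonic_num R (mu./2)
         <= 4 * (mu ^ 2)%:R * ln (mu%:R : R)
    & forall n : nat, (0 < n)%N -> (mu <= n)%N ->
        hit_ge_real R mu x0 (8 * (mu ^ 2)%:R * log_2 R n%:R ^+ 3)
          <= (n%:R : R) `^ (- log_2 R n%:R)].
Proof.
move=> mu_ge2 x0_in; rewrite hit_time_expE // !lee_fin; split.
- exact: exp_hit_ge.
- exact: exp_hit_le.
- have := harmonic_half_le_ln R (ltnW mu_ge2).
  have : (mu - x0)%:R <= (mu - 1)%:R :> R by rewrite ler_nat; lia.
  have : 0 <= mu%:R * harmonic_num R mu./2 by rewrite mulr_ge0 ?ler0n ?harmonic_num_ge0.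
  have : 0 <= mu%:R :> R by rewrite ler0n.
  rewrite natrX; nra.
- by move=> n _ mu_le; apply: hit_ge_real_le.
Qed.
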